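(* A strategy of the chair is regret-free if and only if it is efficient.
   Context: Let $\mathcal{X}$ be a finite set of alternatives. A proto-ranking is an irreflexive and transitive binary relation on $\mathcal{X}$; a ranking is a total proto-ranking; a tournament is a total and asymmetric binary relation on $\mathcal{X}$. The chair has a fixed preference $\succ$, which is a ranking on $\mathcal{X}$. Interaction: given a tournament $\mathrel{W}$, set $R_0=\varnothing$. In each period $t\geq 1$ in which $R_{t-1}$ is not total, the chair offers a pair $\{x,y\}$ of distinct alternatives unranked by $R_{t-1}$; the winner is $x$ if $x\mathrel{W}y$ and $y$ otherwise, and $R_t$ is the transitive closure of $R_{t-1}\cup\{(\text{winner},\text{loser})\}$. The process stops when $R_t$ is total. A history is a finite sequence of (winner, loser) pairs that can arise in this way; it is terminal if its induced proto-ranking is total. A strategy assigns to each non-terminal history a pair unranked at that history. The outcome of $\sigma$ under $\mathrel{W}$ is the final ranking. A ranking is $\mathrel{W}$-feasible if it is the outcome under $\mathrel{W}$ of some strategy. $R$ is more aligned with $\succ$ than $R'$ if for all $x\succ y$, $xR'y$ implies $xRy$. A ranking is $\mathrel{W}$-unimprovable if no other $\mathrel{W}$-feasible ranking is more aligned with $\succ$ than it. A strategy is regret-free if for every tournament $\mathrel{W}$ its outcome under $\mathrel{W}$ is $\mathrel{W}$-unimprovable. A ranking $R$ is $\mathrel{W}$-efficient if $x\succ y$ and $x\mathrel{W}y$ imply $xRy$; a strategy is efficient if for every tournament $\mathrel{W}$ its outcome under $\mathrel{W}$ is $\mathrel{W}$-efficient. *)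

From mathcomp Require Import all_boot.
Set Implicit Arguments. Unset Strict Implicit. Unset Printing Implicit Defensive.

Section Chair.
Variable X : finType.

Definition irreflexive_rel (R : rel X) := forall x, ~~ R x x.
Definition transitive_rel (R : rel X) := forall x y z, R x y -> R y z -> R x z.
Definition total_rel (R : rel X) := forall x y, x != y -> R x y || R y x.
Definition totalb (R : rel X) : bool :=
  [forall x, [forall y, (x != y) ==> (R x y || R y x)]].
Definition asymmetric_rel (R : rel X) := forall x y, R x y -> ~~ R y x.

Definition is_proto_ranking (R : rel X) := irreflexive_rel R /\ transitive_rel R.
Definition is_ranking (R : rel X) := is_proto_ranking R /\ total_rel R.
Definition is_tournament (W : rel X) := total_rel W /\ asymmetric_rel W.

(* histories: sequences of (winner, loser) pairs *)
Definition history := seq (X * X).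

Definition hedge (h : history) : rel X := fun x y => (x, y) \in h.
Definition induced (h : history) : rel X :=
  fun x y => [exists z, hedge h x z && connect (hedge h) z y].

Definition unranked (R : rel X) (p : X * X) : bool :=
  [&& p.1 != p.2, ~~ R p.1 p.2 & ~~ R p.2 p.1].

Definition valid_history (h : history) : Prop :=
  forall i, i < size h ->
    exists p : X * X, nth p h i = p /\
      unranked (induced (take i h)) p /\ ~~ totalb (induced (take i h)).

Definition terminal (h : history) : bool := totalb (induced h).

Definition is_strategy (s : history -> X * X) : Prop :=
  forall h, valid_history h -> ~~ terminal h -> unranked (induced h) (s h).

Definition winner (W : rel X) (p : X * X) : X := if W p.1 p.2 then p.1 else p.2.
Definition loser (W : rel X) (p : X * X) : X := if W p.1 p.2 then p.2 else p.1.

(* running the interaction (with fuel; #|X|^2 steps always suffice) *)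
Fixpoint play (s : history -> X * X) (W : rel X) (fuel : nat) (h : history)
  : history :=
  match fuel with
  | 0 => h
  | f.+1 => if terminal h then h
            else play s W f (rcons h (winner W (s h), loser W (s h)))
  end.

Definition outcome (s : history -> X * X) (W : rel X) : rel X :=
  induced (play s W (#|X| * #|X|) [::]).

Definition rel_eq (R R' : rel X) := forall x y, R x y = R' x y.

Definition feasible (W : rel X) (R : rel X) : Prop :=
  is_ranking R /\ exists s, is_strategy s /\ rel_eq (outcome s W) R.

Definition more_aligned (pref : rel X) (R R' : rel X) : Prop :=
  forall x y, pref x y -> R' x y -> R x y.

Definition unimprovable (pref W : rel X) (R : rel X) : Prop :=
  forall R', feasible W R' -> ~ rel_eq R' R -> ~ more_aligned pref R' R.

Definition regret_free (pref : rel X) (s : history -> X * X) : Prop :=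
  forall W, is_tournament W -> unimprovable pref W (outcome s W).

Definition W_efficient (pref W : rel X) (R : rel X) : Prop :=
  forall x y, pref x y -> W x y -> R x y.

Definition efficient (pref : rel X) (s : history -> X * X) : Prop :=
  forall W, is_tournament W -> W_efficient pref W (outcome s W).

End Chair.

(* If a W-feasible ranking R' differs from the outcome R and is more aligned
   with the chair's preference, then, R' being the transitive closure of the
   pairs actually played under W, some played pair (a, b), so W a b, is ranked
   a over b by R' and b over a by R.  Whichever way the chair ranks a and b,
   this contradicts either efficiency of R or the alignment of R' with R.

   Conversely, suppose the outcome R ranks y over x although x beats y and the
   chair prefers x.  Under the tournament that agrees with R except that x
   beats y, the strategy plays exactly the same game, so R is still the
   outcome.  Raising above the rest, in their R-order, x, the alternatives
   R-above y and those R-between y and x that the chair prefers to x, gives a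
   ranking more aligned than R.  It is feasible for that tournament, because
   it is the transitive closure of the pairs on which it agrees with the
   tournament, and such a ranking is reached by the strategy that greedily
   offers these pairs. *)

From mathcomp Require Import all_boot.
Set Implicit Arguments. Unset Strict Implicit. Unset Printing Implicit Defensive.

Section Chair.
Variable X : finType.
Implicit Types (h : history X) (R W : rel X) (s : history X -> X * X).

Definition spans (E R : rel X) :=
  forall I : rel X, transitive_rel I -> subrel E I -> subrel R I.

Lemma totalP R : reflect (total_rel R) (totalb R).
Proof.
apply: (iffP forallP) => [totR a b nab | totR a].
- by have /forallP/(_ b)/implyP := totR a; apply.
- by apply/forallP => b; apply/implyP; apply: totR.
Qed.

Lemma proto_ranking_asym R a b : is_proto_ranking R -> R a b -> ~~ R b a.
Proof.
by case=> irrR trR Rab; apply/negP => Rba; have := irrR a; rewrite (trR _ _ _ Rab Rba).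
Qed.

Lemma proto_ranking_neq R a b : is_proto_ranking R -> R a b -> a != b.
Proof. by case=> irrR _ Rab; apply: contraTneq Rab => ->; apply: irrR. Qed.

Lemma total_subrel_eq R1 R2 :
  total_rel R1 -> is_proto_ranking R2 -> subrel R1 R2 -> rel_eq R1 R2.
Proof.
move=> totR1 prR2 R12 a b; apply/idP/idP => [/R12 // | R2ab].
have /orP[// | R1ba] := totR1 _ _ (proto_ranking_neq prR2 R2ab).
by have := proto_ranking_asym prR2 R2ab; rewrite R12.
Qed.

Lemma induced_edge h a b : (a, b) \in h -> induced h a b.
Proof. by move=> hab; apply/existsP; exists b; rewrite /hedge hab connect0. Qed.

Lemma induced_trans h : transitive_rel (induced h).
Proof.
move=> x y z /existsP[u /andP[hxu uy]] /existsP[v /andP[hyv vz]].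
apply/existsP; exists u; rewrite hxu /=.
exact: connect_trans uy (connect_trans (connect1 hyv) vz).
Qed.

Lemma induced_spans h : spans (hedge h) (induced h).
Proof.
move=> I trI hI a b /existsP[z /andP[/hI Iaz /connectP[p zp ->]]].
elim: p z Iaz zp => [|w p IHp] z Iaz //= /andP[/hI Izw]; apply: IHp.
exact: trI Iaz Izw.
Qed.

Lemma sub_induced_rcons h e : subrel (induced h) (induced (rcons h e)).
Proof.
apply: induced_spans; first exact: induced_trans.
by move=> a b hab; apply: induced_edge; rewrite mem_rcons in_cons [_ \in h]hab orbT.
Qed.

Lemma induced_rcons h a b x y : induced (rcons h (a, b)) x y ->
  induced h x y || ((x == a) || induced h x a) && ((b == y) || induced h b y).
Proof.
pose T u v := induced h u v || ((u == a) || induced h u a) && ((b == v) || induced h b v).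
apply: (@induced_spans _ T) => [u v w | u v]; rewrite /T.
- case/orP=> [Iuv | /andP[ua bv]]; case/orP=> [Ivw | /andP[va bw]].
  + by rewrite (induced_trans Iuv Ivw).
  + case/orP: va => [/eqP <- | Iva]; first by rewrite Iuv bw !orbT.
    by rewrite (induced_trans Iuv Iva) bw !orbT.
  + case/orP: bv => [/eqP -> | Ibv]; first by rewrite Ivw ua !orbT.
    by rewrite (induced_trans Ibv Ivw) ua !orbT.
  + by rewrite ua bw orbT.
- rewrite /hedge mem_rcons in_cons => /orP[/eqP[-> ->] | huv].
  + by rewrite !eqxx orbT.
  + by rewrite induced_edge.
Qed.

Lemma irreflexive_induced_rcons h a b : irreflexive_rel (induced h) ->
  unranked (induced h) (a, b) -> irreflexive_rel (induced (rcons h (a, b))).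
Proof.
move=> irrI /and3P[/= nab nIab nIba] x; apply/negP => /induced_rcons.
rewrite (negbTE (irrI x)) /=.
case/andP=> [/orP[/eqP xa | Ixa] /orP[/eqP bx | Ibx]].
- by move: nab; rewrite -xa bx eqxx.
- by move: nIba; rewrite -xa Ibx.
- by move: nIba; rewrite bx Ixa.
- by move: nIba; rewrite (induced_trans Ibx Ixa).
Qed.

Lemma unranked_winner_loser W R p :
  unranked R p -> unranked R (winner W p, loser W p).
Proof.
rewrite /winner /loser; case: ifP => _; first by case: p.
by case/and3P=> nab nRab nRba; rewrite /unranked /= eq_sym nab nRab nRba.
Qed.

Lemma valid_history_nil : valid_history ([::] : history X).
Proof. by []. Qed.

Lemma valid_history_rcons h e : valid_history h ->
  unranked (induced h) e -> ~~ terminal h -> valid_history (rcons h e).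
Proof.
move=> Vh Ue Nh i; rewrite size_rcons ltnS leq_eqVlt => /orP[/eqP -> | lti].
- by exists e; rewrite nth_rcons ltnn eqxx -cats1 take_size_cat.
- have [p [hi Up]] := Vh i lti.
  by exists p; rewrite nth_rcons lti -cats1 takel_cat ?(ltnW lti).
Qed.

Definition nranked h := #|[set p : X * X | induced h p.1 p.2]|.

Lemma nranked_terminal h : #|X| * #|X| <= nranked h -> terminal h.
Proof.
move=> full; apply/totalP => a b _.
have /eqP allI : [set p : X * X | induced h p.1 p.2] == setT.
  by rewrite eqEcard subsetT cardsT card_prod.
by have := in_setT (a, b); rewrite -allI inE => ->.
Qed.

Lemma mem_play s W f h e : e \in h -> e \in play s W f h.
Proof.
elim: f h => [|f IHf] h he //=; case: ifP => _ //.
by apply: IHf; rewrite mem_rcons in_cons he orbT.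
Qed.

Lemma play_edge s W f h a b : total_rel W -> (a, b) \in play s W f h ->
  (a, b) \in h \/ (a != b -> W a b).
Proof.
move=> totW; elim: f h => [|f IHf] h /=; first by left.
case: ifP => _; first by left.
case/IHf => [|]; last by right.
rewrite mem_rcons in_cons => /orP[/eqP[-> ->] | ]; last by left.
right; rewrite /winner /loser; case: ifP => // Wn nab.
by have := totW _ _ nab; rewrite Wn orbF.
Qed.

Lemma eq_play s W1 W2 f h : asymmetric_rel W2 ->
  (forall a b, (a, b) \in play s W1 f h -> a != b -> W2 a b) ->
  play s W1 f h = play s W2 f h.
Proof.
move=> asymW2; elim: f h => [|f IHf] h //=; case: ifP => // _ W12.
suff <- : (winner W1 (s h), loser W1 (s h)) = (winner W2 (s h), loser W2 (s h)).
  exact: IHf.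
have /W12 : (winner W1 (s h), loser W1 (s h)) \in
    play s W1 f (rcons h (winner W1 (s h), loser W1 (s h))).
  by apply: mem_play; rewrite mem_rcons mem_head.
case: (s h) => u v; rewrite /winner /loser /=.
case: (eqVneq u v) => [<- _ | nuv]; first by rewrite !if_same.
case: ifP => _ /=; first by move/(_ nuv) ->.
by rewrite eq_sym => /(_ nuv) W2vu; rewrite (negbTE (asymW2 _ _ W2vu)).
Qed.

Section Termination.
Variables (s : history X -> X * X) (W : rel X).
Hypothesis s_strategy : is_strategy s.

Lemma valid_history_step h : valid_history h -> ~~ terminal h ->
  valid_history (rcons h (winner W (s h), loser W (s h))).
Proof.
move=> Vh Nh; apply: valid_history_rcons => //.
exact/unranked_winner_loser/s_strategy.
Qed.

Lemma irreflexive_play f h : valid_history h -> irreflexive_rel (induced h) ->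
  irreflexive_rel (induced (play s W f h)).
Proof.
elim: f h => [|f IHf] h Vh irrh //=; case: ifPn => // Nh.
apply: IHf; first exact: valid_history_step.
exact/irreflexive_induced_rcons/unranked_winner_loser/s_strategy.
Qed.

Lemma terminal_play f h : valid_history h -> #|X| * #|X| <= nranked h + f ->
  terminal (play s W f h).
Proof.
elim: f h => [|f IHf] h Vh; first by rewrite addn0 => /nranked_terminal.
move=> enough /=; case: ifPn => // Nh.
apply: IHf; first exact: valid_history_step.
apply: leq_trans enough _; rewrite addnS -addSn leq_add2r.
apply: proper_card; apply/properP; split.
  by apply/subsetP => p; rewrite !inE; apply: sub_induced_rcons.
have /and3P[_ fresh _] := unranked_winner_loser W (s_strategy Vh Nh).
exists (winner W (s h), loser W (s h)); rewrite !inE //=.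
by apply: induced_edge; rewrite mem_rcons mem_head.
Qed.

Lemma outcome_ranking : is_ranking (outcome s W).
Proof.
split; first split.
- apply: irreflexive_play valid_history_nil _ => x.
  by apply/negP => /existsP[z /andP[]].
- exact: induced_trans.
- apply/totalP/terminal_play; [exact: valid_history_nil | exact: leq_addl].
Qed.

End Termination.

Section Greedy.
Variables (s : history X -> X * X) (W R : rel X).
Hypotheses (s_strategy : is_strategy s) (R_ranking : is_ranking R).
Hypothesis R_spanned : spans [rel a b | R a b && W a b] R.

(* The fallback [s] only serves to make [greedy] a strategy at all histories. *)
Definition greedy h : X * X :=
  if [pick p | unranked (induced h) p && R p.1 p.2 && W p.1 p.2] is Some p
  then p else s h.

Lemma greedy_strategy : is_strategy greedy.
Proof.
move=> h Vh Nh; rewrite /greedy; case: pickP => [p /andP[/andP[] //] | _].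
exact: s_strategy.
Qed.

Lemma greedy_step_in h : subrel (induced h) R -> ~~ terminal h ->
  R (winner W (greedy h)) (loser W (greedy h)).
Proof.
move=> hR Nh; rewrite /greedy; case: pickP => [[a b] /andP[/andP[_ Rab] Wab] | none].
  by rewrite /winner /loser /= Wab.
case/negP: Nh; apply/totalP => a b nab.
suff RI : subrel R (induced h).
  by case/orP: (R_ranking.2 _ _ nab) => /RI ->; rewrite ?orbT.
apply: R_spanned; first exact: induced_trans.
move=> u v /andP[Ruv Wuv]; have := none (u, v).
rewrite /= Ruv Wuv !andbT /unranked /= (proto_ranking_neq R_ranking.1 Ruv) /=.
move/negbT; rewrite negb_and !negbK => /orP[// | /hR Rvu].
by have := proto_ranking_asym R_ranking.1 Ruv; rewrite Rvu.
Qed.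

Lemma play_greedy_in f h :
  subrel (hedge h) R -> subrel (hedge (play greedy W f h)) R.
Proof.
elim: f h => [|f IHf] h hR //=; case: ifPn => // Nh; apply: IHf => a b.
rewrite /hedge mem_rcons in_cons => /orP[/eqP[-> ->] | ]; last exact: hR.
by apply: greedy_step_in Nh; apply: induced_spans R_ranking.1.2 hR.
Qed.

Lemma spanned_feasible : feasible W R.
Proof.
split=> //; exists greedy; split; first exact: greedy_strategy.
apply: total_subrel_eq R_ranking.1 _.
  exact: (outcome_ranking W greedy_strategy).2.
by apply: induced_spans R_ranking.1.2 _; apply: play_greedy_in.
Qed.

End Greedy.

Lemma efficient_regret_free pref s : is_ranking pref -> is_strategy s ->
  efficient pref s -> regret_free pref s.
Proof.
move=> [_ tot_pref] s_strategy eff W W_tour R' [R'_ranking [s' [_ R'E]]].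
move=> R'_neq aligned; have R_ranking := outcome_ranking W s_strategy.
set R := outcome s W in R_ranking R'_neq aligned *.
have [[a b] played_ab nRab] :
    exists2 e, e \in play s' W (#|X| * #|X|) [::] & ~~ R e.1 e.2.
  apply/allPn/(contra_notN _ R'_neq) => /allP playedR.
  have out_R : subrel (outcome s' W) R.
    by apply: induced_spans R_ranking.1.2 _ => u v /(playedR (u, v)).
  by apply: total_subrel_eq R'_ranking.2 R_ranking.1 _ => u v; rewrite -R'E => /out_R.
have R'ab : R' a b by rewrite -R'E; apply: induced_edge.
have nab := proto_ranking_neq R'_ranking.1 R'ab.
have Wab : W a b by case: (play_edge W_tour.1 played_ab) => // /(_ nab).
have Rba : R b a by case/orP: (R_ranking.2 _ _ nab) => // Rab; rewrite Rab in nRab.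
case/orP: (tot_pref _ _ nab) => [pab | pba].
- by case/negP: nRab; apply: eff.
- by have := proto_ranking_asym R'_ranking.1 R'ab; rewrite (aligned _ _ pba Rba).
Qed.

Definition orient W x y : rel X := fun a b =>
  if (a, b) == (x, y) then true else if (a, b) == (y, x) then false else W a b.

Definition raise (P : pred X) R : rel X := fun a b =>
  if P a == P b then R a b else P a.

Lemma ranking_tournament R : is_ranking R -> is_tournament R.
Proof. by case=> prR totR; split=> // a b; apply: proto_ranking_asym. Qed.

Lemma orient_tournament W x y : is_tournament W -> x != y ->
  is_tournament (orient W x y).
Proof.
case=> totW asymW nxy; split=> [a b nab | a b]; rewrite /orient.
- case: ifP => // ne_xy; case: ifP => [/eqP[-> ->] | ne_yx]; first by rewrite eqxx.
  case: ifP => [/eqP[eb ea] | _]; first by rewrite ea eb eqxx in ne_yx.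
  case: ifP => [/eqP[eb ea] | _]; first by rewrite ea eb eqxx in ne_xy.
  exact: totW.
- case: ifP => [/eqP[-> ->] _ | ne_xy].
    by rewrite xpair_eqE eq_sym (negbTE nxy) /= eqxx.
  case: ifP => // ne_yx.
  case: ifP => [/eqP[eb ea] | _]; first by rewrite ea eb eqxx in ne_yx.
  case: ifP => [/eqP[eb ea] | _]; first by rewrite ea eb eqxx in ne_xy.
  exact: asymW.
Qed.

Lemma raise_ranking P R : is_ranking R -> is_ranking (raise P R).
Proof.
case=> [[irrR trR] totR]; split; first split.
- by move=> a; rewrite /raise eqxx irrR.
- move=> a b c; rewrite /raise.
  by case: (P a); case: (P b); case: (P c) => //=; apply: trR.
- move=> a b nab; rewrite /raise.
  by case: (P a); case: (P b) => //=; apply: totR.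
Qed.

Lemma outcome_orient s W x y : is_strategy s -> is_tournament W -> W x y ->
  outcome s (orient (outcome s W) x y) = outcome s W.
Proof.
move=> s_strategy [totW asymW] Wxy; have R_ranking := outcome_ranking W s_strategy.
set R := outcome s W in R_ranking *.
have nxy : x != y.
  by apply: contraTneq Wxy => ->; apply/negP => Wyy; have := asymW _ _ Wyy; rewrite Wyy.
rewrite /outcome; congr induced; symmetry; apply: eq_play.
  exact: (orient_tournament (ranking_tournament R_ranking) nxy).2.
move=> a b played_ab nab; rewrite /orient.
case: ifP => // _; case: ifP => [/eqP[ay bx] | _]; last exact: induced_edge.
case: (play_edge totW played_ab) => // /(_ nab) Wab.
by have := asymW _ _ Wab; rewrite ay bx Wxy.
Qed.

Section Promotion.
Variables (pref R : rel X) (x y : X).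
Hypotheses (pref_ranking : is_ranking pref) (R_ranking : is_ranking R).
Hypotheses (Ryx : R y x) (pxy : pref x y).

Definition promoted a := (a == x) || R a y || R a x && pref a x.

Let promote := raise promoted R.

Lemma promoted_x : promoted x.
Proof. by rewrite /promoted eqxx. Qed.

Lemma promoted_y : promoted y = false.
Proof.
have [[irrR _] _] := R_ranking.
rewrite /promoted (negbTE (irrR y)) (negbTE (proto_ranking_neq R_ranking.1 Ryx)).
by rewrite (negbTE (proto_ranking_asym pref_ranking.1 pxy)) andbF.
Qed.

Lemma promote_aligned : more_aligned pref promote R.
Proof.
have [[_ trR] _] := R_ranking; have trp := pref_ranking.1.2.
move=> a b pab Rab; rewrite /promote /raise Rab.
case Pa: (promoted a); case Pb: (promoted b) => //=.
move: Pa Pb; rewrite /promoted => /norP[/norP[nax nRay] nRpax].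
case/orP=> [/orP[/eqP bx | Rby] | /andP[Rbx pbx]].
- by move: nRpax; rewrite -bx Rab pab.
- by rewrite (trR _ _ _ Rab Rby) in nRay.
- by rewrite (trR _ _ _ Rab Rbx) (trp _ _ _ pab pbx) in nRpax.
Qed.

Lemma promote_neq : ~ rel_eq promote R.
Proof.
move/(_ x y); rewrite /promote /raise promoted_x promoted_y /= => Rxy.
by have := proto_ranking_asym R_ranking.1 Ryx; rewrite -Rxy.
Qed.

Lemma orient_block a b : promoted a = promoted b -> orient R x y a b = R a b.
Proof.
move=> Pab; have Pxy : promoted x != promoted y by rewrite promoted_x promoted_y.
rewrite /orient; case: ifP => [/eqP[ax yb] | _]; first by rewrite -ax -yb Pab eqxx in Pxy.
by case: ifP => [/eqP[ay xb] | _] //; rewrite -ay -xb Pab eqxx in Pxy.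
Qed.

Lemma promote_spanned :
  spans [rel a b | promote a b && orient R x y a b] promote.
Proof.
have [[_ trR] totR] := R_ranking.
move=> I trI E_I.
have blockI a b : promoted a = promoted b -> R a b -> I a b.
  by move=> Pab Rab; apply: E_I; rewrite /= /promote /raise Pab eqxx Rab orient_block.
move=> a b; rewrite {1}/promote /raise.
case: (eqVneq (promoted a) (promoted b)) => [Pab Rab | Pab Pa]; first exact: blockI.
have {Pab} Pb : promoted b = false by move: Pab; rewrite Pa; case: (promoted b).
(* Across the blocks, go from a up to x, from x to y, and from y down to b. *)
have Ixy : I x y.
  by apply: E_I; rewrite /= /promote /raise promoted_x promoted_y /orient eqxx.
have Iay : I a y.
  case: (eqVneq a x) => [-> // | nax]; apply: trI Ixy; apply: blockI.
    by rewrite promoted_x.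
  by move: Pa; rewrite /promoted (negbTE nax) => /orP[/(trR _ _ _)/(_ Ryx) | /andP[]].
case: (eqVneq b y) => [-> // | nby]; apply: trI Iay _; apply: blockI.
  by rewrite Pb promoted_y.
move: Pb; rewrite /promoted => /norP[/norP[_ nRby] _].
by have := totR _ _ nby; rewrite (negbTE nRby).
Qed.

End Promotion.

Lemma regret_free_efficient pref s : is_ranking pref -> is_strategy s ->
  regret_free pref s -> efficient pref s.
Proof.
move=> pref_ranking s_strategy rf W W_tour x y pxy Wxy.
have R_ranking := outcome_ranking W s_strategy.
have nxy : x != y := proto_ranking_neq pref_ranking.1 pxy.
case/orP: (R_ranking.2 _ _ nxy) => // Ryx; exfalso.
have := rf _ (orient_tournament (ranking_tournament R_ranking) nxy).
rewrite outcome_orient //; apply.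
- apply: spanned_feasible s_strategy (raise_ranking (promoted pref _ x y) R_ranking) _.
  exact: promote_spanned.
- exact: promote_neq.
- exact: promote_aligned.
Qed.

End Chair.

Theorem theorem2 (X : finType) (pref : rel X) (s : history X -> X * X) :
  is_ranking pref -> is_strategy s ->
  (regret_free pref s <-> efficient pref s).
Proof.
move=> pref_ranking s_strategy; split.
- exact: regret_free_efficient.
- exact: efficient_regret_free.
Qed.
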